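(* Fix job indices $s,k'$ and an integer time $\theta\ge r_s$ such that every job $j\le k'$ with $r_s\le r_j<\theta$ satisfies $C^{\mathrm{edf}}_{s,j}\le\theta$. Suppose there is an $(s,k')$-schedule $Q$ with $C_{\max}(Q)>\theta$ and at most $g$ gaps. Then there is an $(s,k')$-schedule $R$ that schedules all jobs $j\le k'$ with $r_s\le r_j<\theta$ and satisfies: (a) $C_{\max}(R)\le\theta$ and $R$ has at most $g$ gaps; (b) if $C_{\max}(R)<\theta$ then $R$ has strictly fewer than $g$ gaps.
   Context: Time is discrete (slots $[t,t+1)$). There are $n$ jobs, job $j$ with integer processing time $p_j\ge1$, release time $r_j$, deadline $d_j$; jobs are indexed so that $d_1<\dots<d_n$, release times are pairwise distinct, and the instance is feasible. A (partial, preemptive) schedule assigns to each slot at most one job so that each job it schedules receives exactly $p_j$ slots in $[r_j,d_j)$; schedules are taken with the earliest-deadline property (whenever busy at slot $t$, run the released, not yet completed scheduled job of smallest deadline). $C_j(S)$ is the completion time of $j$, $C_{\max}(S)=\max_jC_j(S)$. For $s\in\{1,\dots,n\}$, $k\in\{0,\dots,n\}$, an $(s,k)$-schedule is a schedule $S$ with $C_{\max}(S)\le d_k$ scheduling exactly the jobs $j\le k$ with $r_s\le r_j<C_{\max}(S)$; the empty schedule counts, with $C_{\max}=r_s$. Gaps of an $(s,k)$-schedule: maximal idle intervals between its blocks (maximal busy intervals), plus the idle interval from $r_s$ to its first block if nonempty. For $r_j\ge r_s$, $C^{\mathrm{edf}}_{s,j}$ is the minimum completion time of job $j$ over all $(s,j)$-schedules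 that schedule $j$. *)

From mathcomp Require Import all_boot.
Set Implicit Arguments. Unset Strict Implicit. Unset Printing Implicit Defensive.

(* A schedule assigns to each time slot [t,t+1) at most one job (jobs are 1..n). *)
Definition schedule := nat -> option nat.

Section Scheduling.
Variables (n : nat) (p r d : nat -> nat).

Definition is_job (j : nat) : bool := (0 < j <= n).

(* every busy slot of a valid schedule lies before this horizon *)
Definition horizon : nat := \max_(1 <= j < n.+1) d j.

Definition scheduled (S : schedule) (j : nat) : Prop := exists t, S t = Some j.

Definition nslots (S : schedule) (j a b : nat) : nat :=
  \sum_(a <= t < b) (S t == Some j).

Definition valid (S : schedule) : Prop :=
  (forall t j, S t = Some j -> is_job j /\ r j <= t < d j) /\
  (forall j, scheduled S j -> nslots S j (r j) (d j) = p j).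

Definition edf (S : schedule) : Prop :=
  forall t j i, S t = Some j -> scheduled S i -> r i <= t ->
    nslots S i 0 t < p i -> d j <= d i.

Definition is_schedule (S : schedule) : Prop := valid S /\ edf S.

Definition compl (S : schedule) (j : nat) : nat :=
  \max_(t < horizon | S t == Some j) t.+1.

Definition Cmax (S : schedule) : nat := \max_(t < horizon | S t != None) t.+1.

(* C_max in the (s,k)-schedule sense: the empty schedule has C_max = r_s *)
Definition Cmax_s (s : nat) (S : schedule) : nat :=
  if Cmax S == 0 then r s else Cmax S.

Definition sk_schedule (s k : nat) (S : schedule) : Prop :=
  is_schedule S /\ Cmax_s s S <= d k /\
  (forall j, scheduled S j <-> (is_job j /\ j <= k /\ r s <= r j < Cmax_s s S)).

(* number of gaps: each maximal idle interval in [r_s, C_max) is counted by its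
   first slot t (idle, and either t = r_s or slot t-1 busy) *)
Definition gaps (s : nat) (S : schedule) : nat :=
  \sum_(r s <= t < Cmax_s s S)
     ((S t == None) && ((t == r s) || (S t.-1 != None))).

(* C^edf_{s,j} <= theta : some (s,j)-schedule scheduling j completes j by theta
   (i.e. the minimum of C_j over such schedules is <= theta) *)
Definition Cedf_le (s j theta : nat) : Prop :=
  exists S, sk_schedule s j S /\ scheduled S j /\ compl S j <= theta.

Definition feasible : Prop :=
  exists S, is_schedule S /\ forall j, is_job j -> scheduled S j.

End Scheduling.

From mathcomp Require Import all_boot zify.
Set Implicit Arguments. Unset Strict Implicit. Unset Printing Implicit Defensive.

(* Let J be the set of jobs j <= k' released in [r_s, theta).  The bounds
   C^edf_{s,j} <= theta cap the J-work released at or after any time t by theta - t: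
   an (s,j)-schedule completing the highest-indexed such job j by theta must process,
   before C_j, every J-job released in [t, C_j).  Let x be the earliest time >= r_s at
   which the J-work that Q still has to do fills [x, theta) exactly.  The schedule R
   copies Q before x and then runs EDF on the remaining J-work.  By the cap, R never
   idles in [x, theta), hence completes J exactly by theta; it meets all deadlines since,
   for every j, it has always served the J-jobs of index <= j at least as much as Q.
   With no gap in [x, theta), R has at most the gaps of Q, and strictly fewer if it
   stops before theta. *)

Section NatSums.
Variables (I : eqType) (rI : seq I) (P : pred I).

Lemma leq_sum_term (F : I -> nat) i0 :
  i0 \in rI -> P i0 -> F i0 <= \sum_(i <- rI | P i) F i.
Proof. by move=> r_i0 P_i0; rewrite (big_rem i0) //= P_i0 leq_addr. Qed.

Lemma ltn_sum_seq (E1 E2 : I -> nat) i0 :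
  (forall i, P i -> E1 i <= E2 i) -> i0 \in rI -> P i0 -> E1 i0 < E2 i0 ->
  \sum_(i <- rI | P i) E1 i < \sum_(i <- rI | P i) E2 i.
Proof.
move=> leE12 r_i0 P_i0 lt_i0.
rewrite (big_rem i0) // [X in _ < X](big_rem i0) //= P_i0 -addSn.
by apply: leq_add lt_i0 _; apply: leq_sum.
Qed.

Lemma eq_of_leq_sum (E1 E2 : I -> nat) :
  (forall i, P i -> E1 i <= E2 i) ->
  \sum_(i <- rI | P i) E2 i <= \sum_(i <- rI | P i) E1 i ->
  forall i, i \in rI -> P i -> E1 i = E2 i.
Proof.
move=> leE12 sum_le i r_i P_i; apply/eqP; rewrite eqn_leq leE12 //= leqNgt.
by apply: contraTN sum_le => lt_i; rewrite -ltnNge (ltn_sum_seq leE12 r_i).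
Qed.

End NatSums.

Lemma ohead_filter_mem (T : eqType) (Q : pred T) (s : seq T) j :
  ohead [seq i <- s | Q i] = Some j -> j \in s /\ Q j.
Proof.
elim: s => [//|y s IH] /=; case: ifP => [Qy [<-]|_ /IH [s_j Q_j]].
  by rewrite mem_head.
by rewrite in_cons s_j orbT.
Qed.

Lemma ohead_filter_none (T : eqType) (Q : pred T) (s : seq T) :
  ohead [seq i <- s | Q i] = None -> forall i, i \in s -> ~~ Q i.
Proof.
elim: s => [//|y s IH] /=; case: ifP => [//|Qy /IH Hs] i; rewrite in_cons.
by case/orP => [/eqP ->|/Hs]; rewrite ?Qy.
Qed.

Lemma ohead_filter_iota_min (P : pred nat) a b j i :
  ohead [seq k <- index_iota a b | P k] = Some j -> a <= i < b -> P i -> j <= i.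
Proof.
rewrite /index_iota; move: (b - a) => m; elim: m a => [|m IH] a //=.
case: ifP => [Pa [<-]|Pa /IH Hmin] /andP[le_ai lt_ib] Pi //.
apply: Hmin => //; rewrite lt_ib andbT ltn_neqAle le_ai andbT.
by apply/eqP => eq_ai; move: Pa; rewrite eq_ai Pi.
Qed.

Section Schedules.
Variables (n : nat) (p r d : nat -> nat).
Implicit Types (S : schedule) (i j : nat).

Lemma nslots_cat S j a m b : a <= m <= b ->
  nslots S j a b = nslots S j a m + nslots S j m b.
Proof. by case/andP=> le_am le_mb; rewrite /nslots (big_cat_nat le_am le_mb). Qed.

Lemma nslots_recr S j a b : a <= b ->
  nslots S j a b.+1 = nslots S j a b + (S b == Some j).
Proof. by move=> le_ab; rewrite /nslots big_nat_recr. Qed.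

Lemma nslots_eq0 S j a b : (forall t, a <= t < b -> S t <> Some j) ->
  nslots S j a b = 0.
Proof.
move=> not_j; rewrite /nslots big_nat_cond big1 // => t /andP[ab_t _].
by case: eqP => // /(not_j t ab_t).
Qed.

Lemma leq_nslots_hi S j a b b' : b <= b' -> nslots S j a b <= nslots S j a b'.
Proof.
move=> le_bb'; case: (leqP a b) => [le_ab|lt_ba].
  by rewrite (@nslots_cat S j a b b') ?le_ab ?le_bb' // leq_addr.
by rewrite /nslots big_geq // ltnW.
Qed.

Lemma leq_nslots_lo S j a a' b : a <= a' -> nslots S j a' b <= nslots S j a b.
Proof.
move=> le_aa'; case: (leqP a' b) => [le_a'b|lt_ba'].
  by rewrite (@nslots_cat S j a a' b) ?le_aa' ?le_a'b // leq_addl.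
by rewrite /nslots [X in X <= _]big_geq // ltnW.
Qed.

Lemma nslots_gt0_scheduled S j a b : 0 < nslots S j a b -> scheduled S j.
Proof.
rewrite lt0n sum_nat_seq_neq0 => /hasP[t _].
by case: (S t =P Some j) => // St _; exists t.
Qed.

Lemma nslots_window S j a b : (forall t, S t = Some j -> r j <= t < d j) ->
  a <= r j -> d j <= b -> nslots S j a b = nslots S j (r j) (d j).
Proof.
move=> win le_ar le_db; case: (leqP (r j) (d j)) => [le_rd|lt_dr]; last first.
  by rewrite [RHS]/nslots big_geq ?(ltnW lt_dr) // nslots_eq0 // => t _ /win; lia.
have before : nslots S j a (r j) = 0 by apply: nslots_eq0 => t /andP[_ ?] /win; lia.
have after : nslots S j (d j) b = 0 by apply: nslots_eq0 => t /andP[? _] /win; lia.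
rewrite (@nslots_cat S j a (r j) b) ?le_ar ?(leq_trans le_rd le_db) // before.
by rewrite (@nslots_cat S j (r j) (d j) b) ?le_rd ?le_db // after addn0.
Qed.

Lemma deadline_le_horizon j : is_job n j -> d j <= horizon n d.
Proof.
by case/andP=> j_gt0 j_le_n; apply: (leq_bigmax_seq (P := xpredT)); rewrite ?mem_index_iota ?j_gt0.
Qed.

Section Valid.
Variable S : schedule.
Hypothesis S_valid : valid n p r d S.

Lemma valid_window t j : S t = Some j -> is_job n j /\ r j <= t < d j.
Proof. by case: S_valid => win _ /win. Qed.

Lemma valid_nslots_before_release j a b : b <= r j -> nslots S j a b = 0.
Proof. by move=> le_br; apply: nslots_eq0 => t /andP[_ lt_tb] /valid_window[_]; lia. Qed.

Lemma valid_nslots_total j a b : scheduled S j -> a <= r j -> d j <= b ->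
  nslots S j a b = p j.
Proof.
move=> sj le_ar le_db; rewrite (nslots_window _ le_ar le_db) => [|t /valid_window[] //].
by case: S_valid => _ ->.
Qed.

Lemma valid_nslots_le j a b : nslots S j a b <= p j.
Proof.
case: (posnP (nslots S j a b)) => [->//|/nslots_gt0_scheduled sj].
have [t /valid_window[jj _]] := sj.
apply: leq_trans (leq_nslots_lo S j b (leq0n a)) _.
apply: leq_trans (leq_nslots_hi S j 0 (leq_maxl b (horizon n d))) _.
by rewrite valid_nslots_total // (leq_trans (deadline_le_horizon jj)) ?leq_maxr.
Qed.

Lemma valid_running_incomplete t j : S t = Some j -> nslots S j 0 t < p j.
Proof.
by move=> St; have := valid_nslots_le j 0 t.+1; rewrite nslots_recr // St eqxx addn1.
Qed.

Lemma valid_lt_Cmax t : S t <> None -> t < Cmax n d S.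
Proof.
case St: (S t) => [j|] // _; have [jj /andP[_ lt_td]] := valid_window St.
have lt_tH : t < horizon n d by apply: leq_trans lt_td (deadline_le_horizon jj).
pose busy := fun t : 'I_(horizon n d) => S t != None.
by apply: (@leq_bigmax_cond _ busy _ (Ordinal lt_tH)); rewrite /busy /= St.
Qed.

Lemma valid_idle_from_Cmax t : Cmax n d S <= t -> S t = None.
Proof.
case St: (S t) => [j|] // le_Ct; suff : t < Cmax n d S by lia.
by apply: valid_lt_Cmax; rewrite St.
Qed.

Lemma valid_compl_last j : scheduled S j ->
  exists u, [/\ S u = Some j, compl n d S j = u.+1 & forall t, S t = Some j -> t <= u].
Proof.
have lt_H t : S t = Some j -> t < horizon n d.
  by move=> /valid_window[jj /andP[_ lt_td]]; apply: leq_trans lt_td (deadline_le_horizon jj).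
case=> t0 St0; pose Pj := fun t : 'I_(horizon n d) => S t == Some j.
have Pj0 : Pj (Ordinal (lt_H t0 St0)) by rewrite /Pj /= St0.
rewrite /compl (bigmax_eq_arg _ Pj0).
case: (arg_maxnP (fun t : 'I_(horizon n d) => (t : nat).+1) Pj0) => u /eqP Su u_max.
exists u; split=> // t St.
by have := u_max (Ordinal (lt_H t St)); rewrite /Pj /= St eqxx => /(_ isT).
Qed.

Lemma valid_nslots_compl j : scheduled S j -> nslots S j 0 (compl n d S j) = p j.
Proof.
move=> sj; have [u [Su -> u_last]] := valid_compl_last sj.
have [jj /andP[_ lt_ud]] := valid_window Su.
rewrite -(valid_nslots_total sj (leq0n (r j)) (leqnn (d j))).
rewrite (@nslots_cat S j 0 u.+1 (d j)) ?lt_ud // [nslots _ _ u.+1 _]nslots_eq0 ?addn0 //.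
by move=> t /andP[lt_ut _] /u_last; lia.
Qed.

Lemma valid_release_lt_compl j : scheduled S j -> r j < compl n d S j.
Proof.
by move=> sj; have [u [/valid_window[_ /andP[le_ru _]] -> _]] := valid_compl_last sj.
Qed.

Lemma valid_compl_le_Cmax j : scheduled S j -> compl n d S j <= Cmax n d S.
Proof.
by move=> sj; have [u [Su -> _]] := valid_compl_last sj; apply: valid_lt_Cmax; rewrite Su.
Qed.

Lemma valid_nslots_from_release j a b : a <= r j -> nslots S j a b = nslots S j 0 b.
Proof.
move=> le_ar; case: (leqP a b) => [le_ab|lt_ba].
  by rewrite (@nslots_cat S j 0 a b) ?le_ab // [nslots S j 0 a]valid_nslots_before_release.
by rewrite /nslots big_geq ?(ltnW lt_ba) // -/(nslots S j 0 b) valid_nslots_before_release //; lia.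
Qed.

End Valid.

Lemma Cmax_le_idle S m : (forall t, m <= t -> S t = None) -> Cmax n d S <= m.
Proof.
move=> idle; apply/bigmax_leqP => t; rewrite ltnNge.
by apply: contraNN => le_mt; rewrite idle.
Qed.

Lemma Cmax_last_busy S : 0 < Cmax n d S -> S (Cmax n d S).-1 <> None.
Proof.
pose busy := fun t : 'I_(horizon n d) => S t != None.
rewrite /Cmax -/busy; case: (pickP busy) => [t0 busy_t0|no_busy].
  rewrite (bigmax_eq_arg _ busy_t0).
  by case: (arg_maxnP (fun t : 'I_(horizon n d) => (t : nat).+1) busy_t0) => u /eqP.
by rewrite big_pred0.
Qed.

Lemma edf_done_before S t i j : edf p r d S -> S t = Some j -> scheduled S i ->
  r i <= t -> d i < d j -> p i <= nslots S i 0 t.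
Proof.
move=> S_edf St si le_rt lt_dd; rewrite leqNgt; apply/negP => incomplete.
by have := S_edf t j i St si le_rt incomplete; rewrite leqNgt lt_dd.
Qed.

Lemma sum_running_le1 S t a b (P : pred nat) :
  \sum_(a <= i < b | P i) (S t == Some i) <= 1.
Proof.
case: (S t) => [j|]; last by rewrite big1.
rewrite (eq_bigr (fun i => if i == j then 1 else 0)) => [|i _]; last first.
  by rewrite (inj_eq Some_inj) eq_sym; case: eqP.
rewrite -big_mkcondr sum1_count; apply: leq_trans (leq_b1 (j \in index_iota a b)).
rewrite -(count_uniq_mem _ (iota_uniq _ _)); apply: sub_count => i /andP[_ /eqP->].
by rewrite /= eqxx.
Qed.

Lemma sum_running_eq1 S t a b (P : pred nat) j : S t = Some j -> a <= j < b -> P j ->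
  \sum_(a <= i < b | P i) (S t == Some i) = 1.
Proof.
move=> St ab_j Pj; apply/eqP; rewrite eqn_leq sum_running_le1 /=.
have := @leq_sum_term _ (index_iota a b) P (fun i => S t == Some i) j.
by rewrite St eqxx mem_index_iota; apply.
Qed.

Lemma sum_running_eq0 S t a b (P : pred nat) : (forall j, S t = Some j -> ~~ P j) ->
  \sum_(a <= i < b | P i) (S t == Some i) = 0.
Proof. by move=> notP; rewrite big1 // => i Pi; case: eqP => // /notP; rewrite Pi. Qed.

Lemma sum_nslots_le S a b c e (P : pred nat) :
  \sum_(c <= i < e | P i) nslots S i a b <= b - a.
Proof.
rewrite /nslots exchange_big /=; apply: leq_trans (_ : \sum_(a <= t < b) 1 <= _).
  by apply: leq_sum => t _; apply: sum_running_le1.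
by rewrite sum_nat_const_nat muln1.
Qed.

Section SkSchedules.
Variable s : nat.

Definition gap_start S t := (S t == None) && ((t == r s) || (S t.-1 != None)).

Lemma gapsE S : gaps n r d s S = \sum_(r s <= t < Cmax_s n r d s S) gap_start S t.
Proof. by []. Qed.

Lemma Cmax_le_Cmax_s S : Cmax n d S <= Cmax_s n r d s S.
Proof. by rewrite /Cmax_s; case: eqP => [->|]. Qed.

Lemma gap_start_Cmax_s S : valid n p r d S -> gap_start S (Cmax_s n r d s S).
Proof.
move=> S_valid; rewrite /gap_start valid_idle_from_Cmax ?Cmax_le_Cmax_s //= /Cmax_s.
case: ifP => [_|/negbT C_neq0]; first by rewrite eqxx.
by apply/orP; right; apply/eqP; apply: Cmax_last_busy; rewrite lt0n.
Qed.

Lemma sk_schedule_Cmax_s_ge k S : sk_schedule n p r d s k S -> r s <= Cmax_s n r d s S.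
Proof.
case=> [[S_valid _] [_ sched_iff]]; rewrite /Cmax_s; case: eqP => // /eqP C_neq0.
have := @Cmax_last_busy S; rewrite lt0n C_neq0 => /(_ isT).
case St: (S _) => [j|] // _; have [_ [_ /andP[le_sj _]]] := (sched_iff j).1 (ex_intro _ _ St).
have [_ /andP[le_rt _]] := valid_window S_valid St; rewrite /Cmax_s; lia.
Qed.

End SkSchedules.

End Schedules.

(** * The workload bound and the switching time *)

Section Lemma8.
Variables (n : nat) (p r d : nat -> nat).
Hypothesis p_gt0 : forall j, is_job n j -> 0 < p j.
Hypothesis d_increasing : forall i j, is_job n i -> is_job n j -> i < j -> d i < d j.
Variables (s k' theta : nat).
Hypothesis k'_job : is_job n k'.
Hypothesis rs_le_theta : r s <= theta.
Hypothesis Cedf_le_theta : forall j, is_job n j -> j <= k' -> r s <= r j < theta ->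
  Cedf_le n p r d s j theta.
Variable Q : schedule.
Hypothesis Q_sk : sk_schedule n p r d s k' Q.
Hypothesis theta_lt_Cmax_Q : theta < Cmax_s n r d s Q.

Lemma leq_deadline i j : is_job n i -> is_job n j -> i <= j -> d i <= d j.
Proof.
by move=> ii jj; rewrite leq_eqVlt => /orP[/eqP-> // | /(d_increasing ii jj)/ltnW].
Qed.

Lemma edf_work_before_compl S j i t : is_schedule n p r d S ->
  scheduled S j -> scheduled S i -> i <= j -> t <= r i < compl n d S j ->
  p i <= nslots S i t (compl n d S j).
Proof.
move=> [S_valid S_edf] sj si le_ij /andP[le_tr lt_rc].
rewrite (valid_nslots_from_release S_valid) //.
case: (ltnP i j) => [lt_ij|le_ji]; last first.
  have -> : i = j by apply/eqP; rewrite eqn_leq le_ij le_ji.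
  by rewrite (valid_nslots_compl S_valid sj).
have [u [Su compl_u _]] := valid_compl_last S_valid sj.
have [t0 /(valid_window S_valid)[ii _]] := si.
have [jj _] := valid_window S_valid Su.
have le_ru : r i <= u by rewrite -ltnS -compl_u.
rewrite compl_u; apply: leq_trans (leq_nslots_hi S i 0 (leqnSn u)).
exact: edf_done_before S_edf Su si le_ru (d_increasing ii jj lt_ij).
Qed.

Definition inJ j := [&& is_job n j, j <= k' & r s <= r j < theta].

Lemma inJ_job j : inJ j -> is_job n j.
Proof. by case/and3P. Qed.

Lemma inJ_iota j : inJ j -> j \in index_iota 1 n.+1.
Proof. by case/and3P=> /andP[j_gt0 j_le_n] _ _; rewrite mem_index_iota j_gt0 ltnS. Qed.

(* The (s,j)-schedule witnessing [C^edf_{s,j} <= theta] for the J-job [j] of largest index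
   released from [t] on processes every J-job released in [t, C_j) inside [t, C_j); the
   J-jobs released from [C_j] on are handled by induction. *)
Lemma J_work_from t : \sum_(1 <= i < n.+1 | inJ i && (t <= r i)) p i <= theta - t.
Proof.
have [m] := ubnP (theta - t); elim: m t => // m IH t lt_m.
set P := fun i => inJ i && (t <= r i).
have [/hasP[j0 _ Pj0]|/hasPn none] := boolP (has P (index_iota 1 n.+1)); last first.
  by rewrite big_seq_cond big1 // => i /andP[/none /negPf]; rewrite /P => ->.
have P_le_n i : P i -> i <= n by case/andP=> /inJ_job/andP[].
case: (ex_maxnP (ex_intro _ j0 Pj0) P_le_n) => j /andP[Jj le_trj] j_max.
have [jj le_jk rng_j] := and3P Jj.
have [S [[S_sched [_ S_iff]] [sj le_c_theta]]] := Cedf_le_theta jj le_jk rng_j.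
have S_valid := S_sched.1.
set c := compl n d S j in le_c_theta *.
have lt_rc : r j < c := valid_release_lt_compl S_valid sj.
have le_c_Cmax : c <= Cmax_s n r d s S.
  by apply: leq_trans (valid_compl_le_Cmax S_valid sj) _; apply: Cmax_le_Cmax_s.
rewrite (bigID (fun i => r i < c)) /=.
have -> : \sum_(1 <= i < n.+1 | P i && ~~ (r i < c)) p i
        = \sum_(1 <= i < n.+1 | inJ i && (c <= r i)) p i.
  apply: eq_bigl => i; rewrite /P -leqNgt; case: (inJ i) => //=.
  by case: (leqP c (r i)) => [le_c|_]; rewrite ?andbT ?andbF //; lia.
have before_c : \sum_(1 <= i < n.+1 | inJ i && (t <= r i) && (r i < c)) p i <= c - t.
  apply: leq_trans (sum_nslots_le S t c 1 n.+1 _); apply: leq_sum.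
  move=> i /andP[/andP[Ji le_tri] lt_ric]; have [ii le_ik rng_i] := and3P Ji.
  have le_ij : i <= j by apply: j_max; rewrite /P Ji.
  apply: edf_work_before_compl => //; last by rewrite le_tri.
  by apply/S_iff; split=> //; split=> //; move: rng_i; lia.
have := IH c; lia.
Qed.

Lemma Q_valid : valid n p r d Q.
Proof. by case: Q_sk => [[]]. Qed.

Lemma Q_edf : edf p r d Q.
Proof. by case: Q_sk => [[]]. Qed.

Lemma Q_sched_iff j :
  scheduled Q j <-> is_job n j /\ j <= k' /\ r s <= r j < Cmax_s n r d s Q.
Proof. by case: Q_sk => _ []. Qed.

Lemma Cmax_s_Q_le : Cmax_s n r d s Q <= d k'.
Proof. by case: Q_sk => _ []. Qed.

Lemma theta_lt_horizon : theta < horizon n d.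
Proof.
exact: leq_trans theta_lt_Cmax_Q (leq_trans Cmax_s_Q_le (deadline_le_horizon d k'_job)).
Qed.

Lemma Q_run_inJ t j : Q t = Some j -> t < theta -> inJ j.
Proof.
move=> Qt lt_t_theta; have [_ /andP[le_rt _]] := valid_window Q_valid Qt.
have [jj [le_jk /andP[le_sr _]]] := (Q_sched_iff j).1 (ex_intro _ t Qt).
by rewrite /inJ jj le_jk le_sr /=; lia.
Qed.

Lemma inJ_scheduled_Q j : inJ j -> scheduled Q j.
Proof.
by case/and3P=> jj le_jk /andP[le_sr lt_r]; apply/Q_sched_iff; do 2!split=> //; rewrite le_sr; lia.
Qed.

Lemma nslots_Q_inJ j a : inJ j -> a <= r j -> nslots Q j a (horizon n d) = p j.
Proof.
move=> Jj le_ar; apply: (valid_nslots_total Q_valid (inJ_scheduled_Q Jj)) => //.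
exact: deadline_le_horizon (inJ_job Jj).
Qed.

Definition work := \sum_(1 <= i < n.+1 | inJ i) p i.

Definition rem_work y := \sum_(1 <= i < n.+1 | inJ i) nslots Q i y (horizon n d).

Lemma work_le : work <= theta - r s.
Proof.
rewrite /work (eq_bigl (fun i => inJ i && (r s <= r i))) ?J_work_from // => i.
by case Ji: (inJ i) => //=; case/and3P: Ji => _ _ /andP[->].
Qed.

Lemma rem_work_rs : rem_work (r s) = work.
Proof. by apply: eq_bigr => i Ji; apply: nslots_Q_inJ => //; case/and3P: Ji => _ _ /andP[]. Qed.

Lemma served_add_rem_work y : y <= horizon n d ->
  \sum_(1 <= i < n.+1 | inJ i) nslots Q i 0 y + rem_work y = work.
Proof.
move=> le_yH; rewrite /rem_work -big_split; apply: eq_bigr => i Ji /=.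
by rewrite -(@nslots_cat Q i 0 y) ?le_yH //; apply: nslots_Q_inJ.
Qed.

Lemma rem_work_homo y : rem_work y.+1 <= rem_work y.
Proof. by apply: leq_sum => i _; apply: leq_nslots_lo. Qed.

Lemma rem_work_step y : y < horizon n d -> rem_work y <= (rem_work y.+1).+1.
Proof.
move=> lt_yH; rewrite /rem_work.
have -> : \sum_(1 <= i < n.+1 | inJ i) nslots Q i y (horizon n d) =
    \sum_(1 <= i < n.+1 | inJ i) ((Q y == Some i) + nslots Q i y.+1 (horizon n d)).
  apply: eq_bigr => i _; rewrite (@nslots_cat Q i y y.+1) ?lt_yH ?leqnSn //.
  by rewrite /nslots big_nat1.
by rewrite big_split /=; have := sum_running_le1 Q y 1 n.+1 inJ; lia.
Qed.

(* [rem_work y + y] is nondecreasing, at most [theta] at [r s] and at least [theta] at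
   [theta]: take the first [y >= r s] where it reaches [theta]. *)
Lemma balance_point : exists2 x, x <= theta & rem_work x = theta - x.
Proof.
pose full y := (r s <= y) && (theta <= rem_work y + y).
have [|x /andP[le_sx full_x] x_min] := @ex_minnP full.
  by exists theta; rewrite /full rs_le_theta leq_addl.
have le_x_theta : x <= theta by apply: x_min; rewrite /full rs_le_theta leq_addl.
exists x => //; case: (ltnP (r s) x) => [lt_sx|le_xs]; last first.
  have eq_xs : x = r s by lia.
  by have := work_le; rewrite -rem_work_rs -eq_xs; lia.
have not_full : ~~ full x.-1 by apply/negP => /x_min; lia.
have lt_x1H : x.-1 < horizon n d by have := theta_lt_horizon; lia.
have := rem_work_step lt_x1H; have := rem_work_homo x.-1.
rewrite prednK ?(leq_ltn_trans _ lt_sx) //.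
by move: not_full; rewrite /full negb_and -!ltnNge => /orP[]; lia.
Qed.

(** * The repaired schedule *)

Section Repair.
Variable x : nat.
Hypotheses (x_le_theta : x <= theta) (rem_work_x : rem_work x = theta - x).

Definition pending t (c : nat -> nat) i := [&& inJ i, r i <= t & c i < p i].

Definition edf_pick t c := ohead [seq i <- index_iota 1 n.+1 | pending t c i].

Definition repair_slot t c := if t < x then Q t else if t < theta then edf_pick t c else None.

(* Jobs are indexed by increasing deadline, so running the least pending index is EDF.
   [served t i], the service [R] has given [i] before [t], is computed along with [R]. *)
Fixpoint served t : nat -> nat :=
  if t is t'.+1 then fun i => served t' i + (repair_slot t' (served t') == Some i)
  else fun=> 0.

Definition R t := repair_slot t (served t).

Lemma served_nslots t i : served t i = nslots R i 0 t.
Proof.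
elim: t => [|t IH]; first by rewrite /nslots big_geq.
by rewrite nslots_recr //= -IH.
Qed.

Lemma R_prefix t : t < x -> R t = Q t.
Proof. by rewrite /R /repair_slot => ->. Qed.

Lemma nslots_R_prefix i t : t <= x -> nslots R i 0 t = nslots Q i 0 t.
Proof. by move=> le_tx; apply: eq_big_nat => u /andP[_ lt_ut]; rewrite R_prefix //; lia. Qed.

Lemma R_late t : theta <= t -> R t = None.
Proof. by move=> le_theta_t; rewrite /R /repair_slot !ltnNge le_theta_t (leq_trans x_le_theta). Qed.

Lemma R_mid t : x <= t < theta -> R t = edf_pick t (served t).
Proof. by case/andP=> le_xt lt_t_theta; rewrite /R /repair_slot ltnNge le_xt lt_t_theta. Qed.

Lemma R_run t j : R t = Some j -> [/\ inJ j, r j <= t, t < theta & nslots R j 0 t < p j].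
Proof.
move=> Rt; case: (ltnP t x) => [lt_tx|le_xt].
  rewrite R_prefix // in Rt; have lt_t_theta : t < theta by lia.
  have [_ /andP[le_rt _]] := valid_window Q_valid Rt.
  rewrite (nslots_R_prefix j (ltnW lt_tx)).
  split=> //; first exact: Q_run_inJ Rt lt_t_theta.
  exact: (valid_running_incomplete Q_valid Rt).
case: (ltnP t theta) => [lt_t_theta|le_theta_t]; last by rewrite R_late in Rt.
rewrite R_mid ?le_xt // in Rt; have [_ /and3P[Jj le_rt]] := ohead_filter_mem Rt.
by rewrite served_nslots.
Qed.

Lemma nslots_R_le i t : nslots R i 0 t <= p i.
Proof.
elim: t => [|t IH]; first by rewrite /nslots big_geq.
rewrite nslots_recr //; case: eqP => [/R_run[_ _ _]|_]; lia.
Qed.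

Lemma R_pick_min t j i : x <= t < theta -> R t = Some j -> pending t (served t) i -> j <= i.
Proof.
move=> rng_t Rt pend_i; rewrite R_mid // in Rt; apply: (ohead_filter_iota_min Rt) => //.
by case/and3P: pend_i => /inJ_iota; rewrite mem_index_iota.
Qed.

Lemma R_idle_done t i : x <= t < theta -> R t = None -> inJ i -> r i <= t ->
  p i <= nslots R i 0 t.
Proof.
move=> rng_t Rt Ji le_rt; rewrite R_mid // in Rt.
by have := ohead_filter_none Rt (inJ_iota Ji); rewrite /pending Ji le_rt served_nslots -leqNgt.
Qed.

Definition R_work t := \sum_(1 <= i < n.+1 | inJ i) nslots R i 0 t.

Lemma R_workS t : R_work t.+1 = R_work t + (R t != None).
Proof.
rewrite /R_work (eq_bigr (fun i => nslots R i 0 t + (R t == Some i))); last first.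
  by move=> i _; rewrite nslots_recr.
rewrite big_split /=; congr (_ + _); case Rt: (R t) => [j|]; rewrite -Rt.
  have [Jj _ _ _] := R_run Rt.
  by rewrite (sum_running_eq1 Rt _ Jj) ?Rt // -mem_index_iota inJ_iota.
by rewrite sum_running_eq0 // Rt.
Qed.

Lemma work_ge : theta - x <= work.
Proof. by have := served_add_rem_work (ltnW (leq_ltn_trans x_le_theta theta_lt_horizon)); lia. Qed.

Lemma R_work_x : R_work x = work - (theta - x).
Proof.
have -> : R_work x = \sum_(1 <= i < n.+1 | inJ i) nslots Q i 0 x.
  by apply: eq_bigr => i _; apply: nslots_R_prefix.
have := served_add_rem_work (ltnW (leq_ltn_trans x_le_theta theta_lt_horizon)).
by rewrite rem_work_x; lia.
Qed.

(* If [R] idles at [t], it has finished all J-work released by [t], and at most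
   [theta - t.+1] of the J-work is released later; so [R_work t] is too large. *)
Lemma R_busy_of_work t : x <= t < theta -> R_work t = work - (theta - t) -> R t <> None.
Proof.
move=> rng_t R_work_t Rt.
have done_t : \sum_(1 <= i < n.+1 | inJ i && (r i <= t)) p i <= R_work t.
  rewrite /R_work [X in _ <= X](bigID (fun i => r i <= t)) /=.
  apply: leq_trans (leq_addr _ _); apply: leq_sum => i /andP[Ji le_rt].
  exact: R_idle_done.
have later := J_work_from t.+1.
have split_work : work = \sum_(1 <= i < n.+1 | inJ i && (r i <= t)) p i +
                         \sum_(1 <= i < n.+1 | inJ i && (t.+1 <= r i)) p i.
  rewrite /work (bigID (fun i => r i <= t)) /=; congr (_ + _).
  by apply: eq_bigl => i; rewrite ltnNge.
have := work_ge; lia.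
Qed.

Lemma R_work_eq t : x <= t <= theta -> R_work t = work - (theta - t).
Proof.
case/andP=> le_xt; move: (t - x) (subnKC le_xt) => k <- {t le_xt}.
elim: k => [|k IH] le_theta; first by rewrite addn0 R_work_x.
have lt_k : x + k < theta by rewrite -addnS.
have IHk := IH (ltnW lt_k).
have busy : R (x + k) <> None by apply: R_busy_of_work => //; rewrite leq_addr lt_k.
rewrite addnS R_workS IHk; case: (R (x + k)) busy => [j|//] _ /=; have := work_ge; lia.
Qed.

Lemma R_busy t : x <= t < theta -> R t <> None.
Proof.
move=> rng_t; apply: R_busy_of_work => //; apply: R_work_eq.
by case/andP: rng_t => -> /ltnW.
Qed.

Lemma R_complete i : inJ i -> nslots R i 0 theta = p i.
Proof.
move=> Ji; apply: (@eq_of_leq_sum _ _ inJ (fun i => nslots R i 0 theta)) (inJ_iota Ji) Ji.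
  by move=> j _; apply: nslots_R_le.
rewrite -/(R_work theta) R_work_eq ?subnn ?subn0 //.
by rewrite x_le_theta leqnn.
Qed.

Lemma nslots_R_from_theta i t : theta <= t -> nslots R i 0 t = nslots R i 0 theta.
Proof.
move=> le_theta_t; rewrite (@nslots_cat R i 0 theta t) ?le_theta_t //.
by rewrite [nslots R i theta t]nslots_eq0 ?addn0 // => u /andP[le_theta_u _]; rewrite R_late.
Qed.

Lemma R_scheduled i : inJ i -> scheduled R i.
Proof.
by move=> Ji; apply: (@nslots_gt0_scheduled R i 0 theta); rewrite R_complete ?p_gt0 ?inJ_job.
Qed.

Lemma scheduled_R_inJ i : scheduled R i -> inJ i.
Proof. by case=> t /R_run[]. Qed.

Definition work_upto (S : schedule) j t :=
  \sum_(1 <= i < n.+1 | inJ i && (i <= j)) nslots S i 0 t.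

Lemma work_uptoS S j t :
  work_upto S j t.+1 = work_upto S j t + \sum_(1 <= i < n.+1 | inJ i && (i <= j)) (S t == Some i).
Proof. by rewrite /work_upto -big_split; apply: eq_bigr => i _; apply: nslots_recr. Qed.

Lemma R_runs_upto_or_done t j : x <= t ->
  (exists2 j0, R t = Some j0 & j0 <= j) \/
  (forall i, inJ i -> i <= j -> r i <= t -> p i <= nslots R i 0 t).
Proof.
move=> le_xt; case: (ltnP t theta) => [lt_t_theta|le_theta_t]; last first.
  by right=> i Ji _ _; rewrite nslots_R_from_theta // R_complete.
have rng_t : x <= t < theta by rewrite le_xt.
case: (boolP (has (fun i => pending t (served t) i && (i <= j)) (index_iota 1 n.+1))).
  case/hasP=> i _ /andP[pend_i le_ij]; left; case Rt: (R t) => [j0|].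
    by exists j0 => //; apply: leq_trans (R_pick_min rng_t Rt pend_i) le_ij.
  case/and3P: pend_i => Ji le_rt; rewrite served_nslots => lt_served.
  by have := R_idle_done rng_t Rt Ji le_rt; rewrite leqNgt lt_served.
move/hasPn=> none; right=> i Ji le_ij le_rt; rewrite -served_nslots leqNgt.
by apply/negP => lt_served; have := none i (inJ_iota Ji); rewrite /pending Ji le_rt lt_served le_ij.
Qed.

Lemma work_upto_Q_lt t j i : Q t = Some i -> inJ i -> i <= j ->
  (forall i', inJ i' -> i' <= j -> r i' <= t -> p i' <= nslots R i' 0 t) ->
  work_upto Q j t < work_upto R j t.
Proof.
move=> Qt Ji le_ij done_t; have [_ /andP[le_rt _]] := valid_window Q_valid Qt.
apply: (ltn_sum_seq _ (inJ_iota Ji)); rewrite ?Ji ?le_ij //; last first.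
  exact: leq_trans (valid_running_incomplete Q_valid Qt) (done_t i Ji le_ij le_rt).
move=> i' /andP[Ji' le_i'j]; case: (leqP (r i') t) => [le_r't|lt_tr'].
  exact: leq_trans (valid_nslots_le Q_valid i' 0 t) (done_t i' Ji' le_i'j le_r't).
by rewrite (valid_nslots_before_release Q_valid) ?(ltnW lt_tr').
Qed.

(* When the two counts are tied and [Q] serves a J-job of index <= [j], so does [R]:
   otherwise every such job released by [t] is finished in [R], which is then ahead. *)
Lemma work_upto_dom j t : work_upto Q j t <= work_upto R j t.
Proof.
elim: t => [|t IH]; first by rewrite /work_upto !big1 // => i _; rewrite /nslots big_geq.
rewrite !work_uptoS.
have Q_le1 := sum_running_le1 Q t 1 n.+1 (fun i => inJ i && (i <= j)).
case: (ltnP t x) => [lt_tx|le_xt]; first by rewrite R_prefix //; lia.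
case: (ltnP (work_upto Q j t) (work_upto R j t)) => [|le_RQ]; first by lia.
case: (posnP (\sum_(1 <= i < n.+1 | inJ i && (i <= j)) (Q t == Some i))) => [->|]; first by lia.
rewrite lt0n sum_nat_seq_neq0 => /hasP[i _ /andP[/andP[Ji le_ij]]].
case: (Q t =P Some i) => // Qt _.
case: (R_runs_upto_or_done j le_xt) => [[j0 Rt le_j0j]|done_t]; last first.
  by have := work_upto_Q_lt Qt Ji le_ij done_t; lia.
have [Jj0 _ _ _] := R_run Rt.
have R_one : \sum_(1 <= i < n.+1 | inJ i && (i <= j)) (R t == Some i) = 1.
  by apply: (sum_running_eq1 Rt); rewrite ?Jj0 ?le_j0j // -mem_index_iota inJ_iota.
lia.
Qed.

Lemma R_deadline t j : R t = Some j -> t < d j.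
Proof.
move=> Rt; have [Jj _ _ incomplete] := R_run Rt; rewrite ltnNge; apply/negP => le_dt.
have Q_done : work_upto Q j (d j) = \sum_(1 <= i < n.+1 | inJ i && (i <= j)) p i.
  apply: eq_bigr => i /andP[Ji le_ij].
  apply: (valid_nslots_total Q_valid (inJ_scheduled_Q Ji)) => //.
  exact: leq_deadline (inJ_job Ji) (inJ_job Jj) le_ij.
have R_behind : work_upto R j (d j) < \sum_(1 <= i < n.+1 | inJ i && (i <= j)) p i.
  apply: (@ltn_sum_seq _ _ _ _ p j (fun i _ => nslots_R_le i (d j)) (inJ_iota Jj)).
    by rewrite Jj leqnn.
  exact: leq_ltn_trans (leq_nslots_hi R j 0 le_dt) incomplete.
by have := work_upto_dom j (d j); lia.
Qed.

Lemma valid_R : valid n p r d R.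
Proof.
have win j t : R t = Some j -> r j <= t < d j.
  by move=> Rt; have [_ le_rt _ _] := R_run Rt; rewrite le_rt R_deadline.
split=> [t j Rt | j /scheduled_R_inJ Jj].
  by split; [case: (R_run Rt) => /inJ_job | exact: win].
rewrite -(nslots_window (win j) (leq0n _) (leq_maxr theta (d j))).
by rewrite nslots_R_from_theta ?leq_maxl // R_complete.
Qed.

Lemma edf_R : edf p r d R.
Proof.
move=> t j i Rt si le_rt incomplete; have Ji := scheduled_R_inJ si.
case: (ltnP t x) => [lt_tx|le_xt].
  rewrite R_prefix // in Rt; rewrite (nslots_R_prefix i (ltnW lt_tx)) in incomplete.
  exact: Q_edf Rt (inJ_scheduled_Q Ji) le_rt incomplete.
have [Jj _ lt_t_theta _] := R_run Rt.
apply: leq_deadline (inJ_job Jj) (inJ_job Ji) (R_pick_min _ Rt _); first by rewrite le_xt.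
by rewrite /pending Ji le_rt served_nslots.
Qed.

Lemma Cmax_s_R_le : Cmax_s n r d s R <= theta.
Proof. by rewrite /Cmax_s; case: eqP => _ //; apply: Cmax_le_idle R_late. Qed.

Lemma sk_R : sk_schedule n p r d s k' R.
Proof.
split; first by split; [exact: valid_R | exact: edf_R].
split; first exact: leq_trans Cmax_s_R_le (ltnW (leq_trans theta_lt_Cmax_Q Cmax_s_Q_le)).
move=> j; split=> [sj | [jj [le_jk /andP[le_sr lt_rC]]]]; last first.
  by apply: R_scheduled; rewrite /inJ jj le_jk le_sr (leq_trans lt_rC Cmax_s_R_le).
have /and3P[jj le_jk /andP[le_sr _]] := scheduled_R_inJ sj.
have [t Rt] := sj; have [_ le_rt _ _] := R_run Rt.
do 2!split=> //; rewrite le_sr (leq_ltn_trans le_rt) //.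
apply: leq_trans (valid_lt_Cmax valid_R _) (Cmax_le_Cmax_s n r d s R); by rewrite Rt.
Qed.

Lemma gap_start_R_prefix t : t < x -> gap_start r s R t = gap_start r s Q t.
Proof.
move=> lt_tx; rewrite /gap_start !R_prefix //.
exact: leq_ltn_trans (leq_pred t) lt_tx.
Qed.

Lemma gap_start_R t : t < theta -> gap_start r s R t <= gap_start r s Q t.
Proof.
move=> lt_t_theta; case: (ltnP t x) => [lt_tx|le_xt]; first by rewrite gap_start_R_prefix.
rewrite /gap_start; case: (R t =P None) => [Rt|] //=.
by have := @R_busy t; rewrite le_xt lt_t_theta Rt => /(_ isT).
Qed.

Lemma Cmax_s_R_lt_x : Cmax_s n r d s R < theta -> Cmax_s n r d s R < x.
Proof.
move=> lt_C_theta; rewrite ltnNge; apply/negP => le_xC.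
have := @R_busy (Cmax_s n r d s R); rewrite le_xC lt_C_theta => /(_ isT); apply.
exact: (valid_idle_from_Cmax valid_R (Cmax_le_Cmax_s n r d s R)).
Qed.

(* [R] agrees with [Q] before [x] and has no gap in [x, theta); if it stops before
   [theta], the idle slot of [Q] at [C_max(R)] starts a gap that [R] does not have. *)
Lemma gaps_R : gaps n r d s R <= gaps n r d s Q /\
  (Cmax_s n r d s R < theta -> gaps n r d s R < gaps n r d s Q).
Proof.
rewrite !gapsE; set CR := Cmax_s n r d s R; set CQ := Cmax_s n r d s Q.
have le_sR : r s <= CR := sk_schedule_Cmax_s_ge sk_R.
have le_RQ : CR <= CQ := leq_trans Cmax_s_R_le (ltnW theta_lt_Cmax_Q).
have R_le_Q : \sum_(r s <= t < CR) gap_start r s R t <= \sum_(r s <= t < CR) gap_start r s Q t.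
  rewrite big_nat_cond [leqRHS]big_nat_cond; apply: leq_sum => t /andP[/andP[_ lt_tC] _].
  exact/gap_start_R/(leq_trans lt_tC Cmax_s_R_le).
rewrite (big_cat_nat le_sR le_RQ) /=.
split=> [|lt_C_theta]; first exact: leq_trans R_le_Q (leq_addr _ _).
have gap_CR : gap_start r s Q CR.
  by rewrite -gap_start_R_prefix ?Cmax_s_R_lt_x //; apply: gap_start_Cmax_s valid_R.
have lt_CRQ : CR < CQ := ltn_trans lt_C_theta theta_lt_Cmax_Q.
by rewrite [\sum_(CR <= i < CQ) _]big_ltn // gap_CR /=; lia.
Qed.

Lemma R_repairs g : gaps n r d s Q <= g ->
  sk_schedule n p r d s k' R /\
  (forall j, is_job n j -> j <= k' -> r s <= r j < theta -> scheduled R j) /\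
  (Cmax_s n r d s R <= theta /\ gaps n r d s R <= g) /\
  (Cmax_s n r d s R < theta -> gaps n r d s R < g).
Proof.
move=> le_Qg; have [le_RQ lt_RQ] := gaps_R; split; first exact: sk_R.
split; first by move=> j jj le_jk rng_j; apply: R_scheduled; rewrite /inJ jj le_jk.
split; first by rewrite Cmax_s_R_le (leq_trans le_RQ).
by move/lt_RQ/leq_trans; apply.
Qed.

End Repair.

Lemma repaired_schedule g : gaps n r d s Q <= g ->
  exists R : schedule,
    sk_schedule n p r d s k' R /\
    (forall j, is_job n j -> j <= k' -> r s <= r j < theta -> scheduled R j) /\
    (Cmax_s n r d s R <= theta /\ gaps n r d s R <= g) /\
    (Cmax_s n r d s R < theta -> gaps n r d s R < g).
Proof.
move=> le_Qg; have [x le_x_theta rem_x] := balance_point.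
by exists (R x); apply: R_repairs.
Qed.

End Lemma8.

Theorem lemma8 (n : nat) (p r d : nat -> nat)
  (Hp : forall j, is_job n j -> 0 < p j)
  (Hd : forall i j, is_job n i -> is_job n j -> i < j -> d i < d j)
  (Hr : forall i j, is_job n i -> is_job n j -> r i = r j -> i = j)
  (Hfeas : feasible n p r d)
  (s k' theta g : nat)
  (Hs : is_job n s) (Hk : is_job n k') (Htheta : r s <= theta)
  (Hedf : forall j, is_job n j -> j <= k' -> r s <= r j < theta ->
            Cedf_le n p r d s j theta)
  (Q : schedule)
  (HQ : sk_schedule n p r d s k' Q)
  (HQC : theta < Cmax_s n r d s Q)
  (HQg : gaps n r d s Q <= g) :
  exists R : schedule,
    sk_schedule n p r d s k' R /\
    (forall j, is_job n j -> j <= k' -> r s <= r j < theta -> scheduled R j) /\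
    (Cmax_s n r d s R <= theta /\ gaps n r d s R <= g) /\
    (Cmax_s n r d s R < theta -> gaps n r d s R < g).
Proof. exact: (repaired_schedule Hp Hd Hk Htheta Hedf HQ HQC HQg). Qed.
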